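(* Fix $n$ and let $\mathbb{A}$ be the set of adjacency matrices $A_\mathcal{D}$ of DAGs $\mathcal{D}$ on node set $[n]$ such that $i\to j\in E^\mathcal{D}$ implies $i<j$ (equivalently, $A_\mathcal{D}$ is strictly upper triangular). For $A_\mathcal{D}\in\mathbb{A}$ let $T=\sum_{p=0}^{n-1}A_\mathcal{D}^p$ and $U_\mathcal{D}=T^\top T$, and let $\mathbb{Y}=\{U_\mathcal{D}:A_\mathcal{D}\in\mathbb{A}\}$. Then the map $f:\mathbb{A}\to\mathbb{Y}$, $f(A_\mathcal{D})=U_\mathcal{D}$, is a bijection, and $a(U_\mathcal{D})$ is the adjacency matrix of the unconditional dependence graph $\mathcal{U}^\mathcal{D}$.
   Context: The adjacency matrix of a DAG on $[n]$ has $(i,j)$ entry $1$ iff $i\to j$ is an edge, else $0$. For a symmetric matrix $M$, $a(M)$ is the $0/1$ matrix with $a(M)_{v,w}=1$ iff $v\neq w$ and $M_{v,w}\neq0$. A trek in a DAG is a path (no repeated vertices) containing no collider (no node whose two incident path edges both point into it). The unconditional dependence graph $\mathcal{U}^\mathcal{D}$ is the undirected graph on the node set of $\mathcal{D}$ in which distinct $v,w$ are adjacent iff there is a trek between them in $\mathcal{D}$. *)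

From mathcomp Require Import all_boot all_order all_algebra.
Set Implicit Arguments. Unset Strict Implicit. Unset Printing Implicit Defensive.
Import GRing.Theory Num.Theory.
Local Open Scope ring_scope.

(* A DAG on [n] = {0,..,n-1} (as 'I_n) is given by its 0/1 adjacency matrix
   A with A i j = 1 iff i -> j is an edge. *)

Definition adjA (n : nat) (A : 'M[int]_n) : Prop :=
  forall i j : 'I_n, (A i j = 0 \/ A i j = 1) /\ (A i j != 0 -> (i < j)%N).

Definition Tmat (n : nat) (A : 'M[int]_n) : 'M[int]_n := \sum_(p < n) A ^+ p.
Definition Umat (n : nat) (A : 'M[int]_n) : 'M[int]_n := (Tmat A)^T *m Tmat A.

Definition amat (n : nat) (M : 'M[int]_n) : 'M[int]_n :=
  \matrix_(v, w) (if (v != w) && (M v w != 0) then 1 else 0).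

Definition edge (n : nat) (A : 'M[int]_n) (i j : 'I_n) : bool := A i j != 0.
Definition sadj (n : nat) (A : 'M[int]_n) (i j : 'I_n) : bool :=
  edge A i j || edge A j i.

(* x :: q is a path (no repeated vertices, consecutive vertices adjacent)
   without colliders: no interior node k with p_{k-1} -> p_k <- p_{k+1}. *)
Definition is_trek_path (n : nat) (A : 'M[int]_n) (x : 'I_n) (q : seq 'I_n) : Prop :=
  let p := x :: q in
  uniq p /\ path (sadj A) x q /\
  (forall k : nat, (0 < k)%N -> (k.+1 < size p)%N ->
     ~~ (edge A (nth x p k.-1) (nth x p k) && edge A (nth x p k.+1) (nth x p k))).

Definition trek (n : nat) (A : 'M[int]_n) (v w : 'I_n) : Prop :=
  exists q : seq 'I_n, is_trek_path A v q /\ last v q = w.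

Definition udg (n : nat) (A : 'M[int]_n) (v w : 'I_n) : Prop :=
  v <> w /\ trek A v w.

Definition is_adj_matrix (n : nat) (M : 'M[int]_n) (G : 'I_n -> 'I_n -> Prop) : Prop :=
  forall v w : 'I_n, (G v w -> M v w = 1) /\ (~ G v w -> M v w = 0).

From mathcomp Require Import all_boot all_order all_algebra zify.
Set Implicit Arguments. Unset Strict Implicit. Unset Printing Implicit Defensive.
Import GRing.Theory Num.Theory.
Local Open Scope ring_scope.

(* Let A be the adjacency matrix of a DAG on [n] whose edges increase, and
   write i ~> j for "i is an ancestor of j" (a directed path i -> ... -> j).
   1. Since A >= 0, (A^p)_{ij} <> 0 iff there is a directed path of length p
      from i to j; as edges increase, such paths are shorter than n, so A is
      nilpotent, T = sum_{p<n} A^p = (1 - A)^{-1}, and T_{kv} <> 0 iff k ~> v.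
   2. Hence (U_D)_{vw} = sum_k T_{kv} T_{kw} <> 0 iff v and w have a common
      ancestor.  Injectivity: if T_A^T T_A = T_B^T T_B then
      X := T_B (1 - A) = (T_A (1 - B))^T is both upper and lower
      unitriangular, so X = 1 and 1 - A = 1 - B (surjectivity onto the image
      Y is immediate).
   3. A collider-free path has a common ancestor of its endpoints (its
      source vertex); conversely the backward path from v to a maximal common
      ancestor k of v and w followed by the forward path from k to w is a
      trek.  So v <> w are adjacent in U^D iff v <> w and (U_D)_{vw} <> 0. *)

Lemma connect_to_last (T : finType) (e : rel T) (x : T) (p : seq T) (z : T) :
  path e x p -> z \in x :: p -> connect e z (last x p).
Proof.
elim: p x z => [|y p IHp] x z /=; first by move=> _; rewrite inE => /eqP ->.
case/andP=> exy pyp; rewrite inE => /predU1P [->|zp]; last exact: IHp.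
by apply: connect_trans (connect1 exy) _; apply: IHp; rewrite ?mem_head.
Qed.

Section Triangular.
Variables (R : pzRingType) (n : nat).

Definition upper (M : 'M[R]_n) : Prop :=
  forall i j : 'I_n, (j < i)%N -> M i j = 0.

Lemma upper_mul (X Y : 'M[R]_n) : upper X -> upper Y -> upper (X *m Y).
Proof.
move=> uX uY i j lt_ji; rewrite mxE; apply: big1 => k _.
case: (ltnP k i) => [lt_ki|le_ik]; first by rewrite uX ?mul0r.
by rewrite uY ?mulr0 // (leq_trans lt_ji).
Qed.

Lemma diag_mul (X Y : 'M[R]_n) (i : 'I_n) :
  upper X -> upper Y -> (X *m Y) i i = X i i * Y i i.
Proof.
move=> uX uY; rewrite mxE (bigD1 i) //= big1 ?addr0 // => k ne_ki.
case: (ltngtP k i) => [lt_ki|lt_ik|eq_ki]; first by rewrite uX ?mul0r.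
  by rewrite uY ?mulr0.
by move: ne_ki; rewrite (val_inj eq_ki) eqxx.
Qed.

Lemma upper_lower_unitriangular (X : 'M[R]_n) :
  upper X -> upper X^T -> (forall i, X i i = 1) -> X = 1.
Proof.
move=> uX lX dX; apply/matrixP => i j; rewrite [RHS]mxE.
case: (ltngtP i j) => [lt_ij|lt_ji|eq_ij].
- by have := lX j i lt_ij; rewrite mxE -val_eqE (ltn_eqF lt_ij) => ->.
- by rewrite uX // -val_eqE (gtn_eqF lt_ji).
- by rewrite (val_inj eq_ij) eqxx dX.
Qed.
End Triangular.

Section NonnegativeWalks.
Variables (n : nat) (A : 'M[int]_n).
Hypothesis A_ge0 : forall i j, 0 <= A i j.

Lemma pow_ge0 (p : nat) (i j : 'I_n) : 0 <= (A ^+ p) i j.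
Proof.
elim: p i j => [|p IHp] i j; first by rewrite expr0 mxE ler0n.
by rewrite exprS -mulmxE mxE sumr_ge0 // => k _; rewrite mulr_ge0.
Qed.

Lemma pow_neq0 (p : nat) (i j : 'I_n) :
  (A ^+ p) i j != 0 <-> exists r, [/\ size r = p, path (edge A) i r & last i r = j].
Proof.
elim: p i j => [|p IHp] i j.
  rewrite expr0 mxE pnatr_eq0 eqb0 negbK; split => [/eqP <-|[r [/size0nil -> _ <-]]].
    by exists [::].
  by rewrite eqxx.
have step m : (0 < A i m * (A ^+ p) m j) = edge A i m && ((A ^+ p) m j != 0).
  by rewrite lt0r mulf_eq0 negb_or mulr_ge0 ?andbT ?pow_ge0.
rewrite exprS -mulmxE mxE psumr_neq0 => [|m _]; last by rewrite mulr_ge0 ?pow_ge0.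
split=> [/hasP [m _]|[[|m r] [sr pmr lr]]] //; last first.
  case: sr => sr; case/andP: pmr => eim pmr.
  apply/hasP; exists m; first exact: mem_index_enum.
  by rewrite step eim; apply/IHp; exists r.
rewrite /= step => /andP [eim /IHp [r [sr pmr lr]]].
by exists (m :: r); rewrite /= sr eim.
Qed.
End NonnegativeWalks.

Section DAG.
Variables (n : nat) (A : 'M[int]_n).
Hypothesis hA : adjA A.

Lemma edge_lt (i j : 'I_n) : edge A i j -> (i < j)%N.
Proof. exact: (hA i j).2. Qed.

Lemma edge_asym (i j : 'I_n) : edge A i j -> ~~ edge A j i.
Proof. by move=> /edge_lt lt_ij; apply/negP => /edge_lt; rewrite ltnNge ltnW. Qed.

Lemma adj_ge0 (i j : 'I_n) : 0 <= A i j.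
Proof. by have [[->|->] _] := hA i j. Qed.

Lemma adj_lower0 (i j : 'I_n) : (j <= i)%N -> A i j = 0.
Proof. by move=> le_ji; apply/eqP; apply: contraTT le_ji => /edge_lt; rewrite -ltnNge. Qed.

Lemma path_bound (i : 'I_n) (r : seq 'I_n) :
  path (edge A) i r -> (i + size r <= last i r)%N.
Proof.
elim: r i => [|m r IHr] i /=; first by rewrite addn0.
by case/andP => /edge_lt lt_im /IHr; lia.
Qed.

Lemma connect_le (i j : 'I_n) : connect (edge A) i j -> (i <= j)%N.
Proof. by case/connectP=> r /path_bound + ->; apply: leq_trans; rewrite leq_addr. Qed.

Lemma adj_pow_ge0 (p : nat) (i j : 'I_n) : 0 <= (A ^+ p) i j.
Proof. exact: (@pow_ge0 _ A adj_ge0 p i j). Qed.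

Lemma adj_pow_neq0 (p : nat) (i j : 'I_n) :
  (A ^+ p) i j != 0 <-> exists r, [/\ size r = p, path (edge A) i r & last i r = j].
Proof. exact: (@pow_neq0 _ A adj_ge0 p i j). Qed.

Lemma adj_nilpotent : A ^+ n = 0.
Proof.
apply/matrixP => i j; rewrite [RHS]mxE; apply/eqP; apply: contraT.
case/adj_pow_neq0 => r [sr /path_bound + lr]; rewrite sr lr.
by have := ltn_ord j; lia.
Qed.

Lemma Tmat_inv : Tmat A *m (1 - A) = 1.
Proof.
rewrite mulmxE /Tmat mulr_suml.
under eq_bigr do rewrite mulrBr mulr1 -exprSr -opprB.
rewrite sumrN -(big_mkord xpredT (fun p => A ^+ p.+1 - A ^+ p)).
by rewrite telescope_sumr // adj_nilpotent expr0 sub0r opprK.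
Qed.

Lemma Tmat_ge0 (i j : 'I_n) : 0 <= Tmat A i j.
Proof. by rewrite /Tmat summxE sumr_ge0 // => p _; apply: adj_pow_ge0. Qed.

Lemma Tmat_neq0 (k v : 'I_n) : (Tmat A k v != 0) = connect (edge A) k v.
Proof.
rewrite /Tmat summxE psumr_neq0 => [|p _]; last exact: adj_pow_ge0.
apply/hasP/connectP => [[p _]|[r pr ->]].
  rewrite /= lt0r => /andP [/adj_pow_neq0 [r [_ pr <-]] _]; by exists r.
have lt_rn : (size r < n)%N.
  by apply: leq_ltn_trans (ltn_ord (last k r)); apply: leq_trans (path_bound pr); apply: leq_addl.
exists (Ordinal lt_rn); first exact: mem_index_enum.
rewrite /= lt0r adj_pow_ge0 andbT.
by apply/adj_pow_neq0; exists r.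
Qed.

Lemma Tmat_upper : upper (Tmat A).
Proof.
move=> i j lt_ji; apply/eqP; apply: contraTT lt_ji.
by rewrite Tmat_neq0 -leqNgt => /connect_le.
Qed.

Lemma one_sub_adj_upper : upper (1 - A).
Proof. by move=> i j lt_ji; rewrite !mxE -val_eqE (gtn_eqF lt_ji) adj_lower0 ?subr0 // ltnW. Qed.

Lemma one_sub_adj_diag (i : 'I_n) : (1 - A) i i = 1.
Proof. by rewrite !mxE eqxx adj_lower0 ?subr0. Qed.

Lemma Tmat_diag (i : 'I_n) : Tmat A i i = 1.
Proof.
have := congr1 (fun M : 'M[int]_n => M i i) Tmat_inv.
rewrite /= diag_mul ?one_sub_adj_diag ?mulr1 ?mxE ?eqxx //.
  exact: Tmat_upper.
exact: one_sub_adj_upper.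
Qed.

Lemma Umat_neq0 (v w : 'I_n) :
  (Umat A v w != 0) = [exists k, connect (edge A) k v && connect (edge A) k w].
Proof.
rewrite /Umat mxE psumr_neq0 => [|k _]; last by rewrite mxE mulr_ge0 ?Tmat_ge0.
have term k : (0 < (Tmat A)^T v k * Tmat A k w) =
              connect (edge A) k v && connect (edge A) k w.
  by rewrite mxE lt0r mulr_ge0 ?Tmat_ge0 // andbT mulf_eq0 negb_or; congr andb; exact: Tmat_neq0.
apply/hasP/existsP => [[k _ pos]|[k common]].
  by exists k; move: pos; rewrite /= term.
by exists k; rewrite ?mem_index_enum //= term.
Qed.
End DAG.

Lemma Umat_inj (n : nat) (A B : 'M[int]_n) :
  adjA A -> adjA B -> Umat A = Umat B -> A = B.
Proof.
move=> hA hB eqU.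
have transposed : Tmat B *m (1 - A) = (Tmat A *m (1 - B))^T.
  have := congr1 (fun M => (1 - B)^T *m M *m (1 - A)) eqU.
  rewrite /= /Umat -!mulmxA Tmat_inv // mulmx1 mulmxA -trmx_mul => ->.
  by rewrite mulmxA -trmx_mul Tmat_inv // trmx1 mul1mx.
have X1 : Tmat B *m (1 - A) = 1.
  apply: upper_lower_unitriangular.
  - by apply: upper_mul; [exact: Tmat_upper | exact: one_sub_adj_upper].
  - by rewrite transposed trmxK; apply: upper_mul; [exact: Tmat_upper | exact: one_sub_adj_upper].
  - move=> i; rewrite diag_mul ?Tmat_diag ?one_sub_adj_diag ?mulr1 //.
      exact: Tmat_upper.
    exact: one_sub_adj_upper.
have : 1 - A = 1 - B.
  by rewrite -[1 - A]mul1mx -(mulmx1C (Tmat_inv hB)) -mulmxA X1 mulmx1.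
by move/addrI/oppr_inj.
Qed.

Section Treks.
Variables (n : nat) (A : 'M[int]_n).
Hypothesis hA : adjA A.

Fixpoint nocoll (x : 'I_n) (q : seq 'I_n) : bool :=
  if q is y :: q' then
    (if q' is z :: _ then ~~ (edge A x y && edge A z y) else true) && nocoll y q'
  else true.

Lemma nocollP (d x : 'I_n) (q : seq 'I_n) :
  (forall k : nat, (0 < k)%N -> (k.+1 < size (x :: q))%N ->
     ~~ (edge A (nth d (x :: q) k.-1) (nth d (x :: q) k) &&
         edge A (nth d (x :: q) k.+1) (nth d (x :: q) k))) <-> nocoll x q.
Proof.
elim: q x => [|y [|z r] IHq] x.
- by split => // _ k k_gt0 /=; lia.
- by split => // _ k k_gt0 /=; lia.
split=> [noc|/andP [noc_y noc]].
  apply/andP; split; first exact: (noc 1%N).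
  by apply/IHq => -[|k] // _ lt_k; exact: (noc k.+2 isT lt_k).
move=> [|[|k]] // _ lt_k.
by move/(IHq y): noc => /(_ k.+1 isT lt_k).
Qed.

Lemma trek_source (x : 'I_n) (q : seq 'I_n) : path (sadj A) x q -> nocoll x q ->
  exists k, [/\ connect (edge A) k x, connect (edge A) k (last x q)
              & edge A x (head x q) -> k = x].
Proof.
elim: q x => [|y q IHq] x /=; first by exists x; split; rewrite ?connect0.
case/andP => sxy pyq /andP [noc_xy noc_yq].
have [k [ky klast src]] := IHq y pyq noc_yq.
have [exy|nexy] := boolP (edge A x y); last first.
  have eyx : edge A y x by move: sxy; rewrite /sadj (negbTE nexy).
  by exists k; split => //; apply: connect_trans ky (connect1 eyx).
exists x; split; rewrite ?connect0 //; apply: connect_trans (connect1 exy) _.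
move: pyq noc_xy klast src; case: q {IHq noc_yq} => [|z r] /=; first by rewrite connect0.
case/andP=> syz _ nocol klast src; suff eyz : edge A y z by rewrite -(src eyz).
by move: syz nocol; rewrite /sadj exy /= => /orP [] ->.
Qed.

Lemma nocoll_forward (k : 'I_n) (q : seq 'I_n) : path (edge A) k q -> nocoll k q.
Proof.
elim: q k => [|y q IHq] k //= /andP [eky pyq]; rewrite IHq // andbT.
case: q pyq {IHq} => [|z r] //= /andP [eyz _].
by rewrite (negbTE (edge_asym hA eyz)) andbF.
Qed.

Lemma nocoll_backward (v : 'I_n) (r q : seq 'I_n) :
  path (fun a b => edge A b a) v r -> nocoll (last v r) q -> nocoll v (r ++ q).
Proof.
elim: r v => [|u r IHr] v //= /andP [euv pur] noc; rewrite IHr // andbT.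
by case: (r ++ q) => // z _; rewrite (negbTE (edge_asym hA euv)).
Qed.

Lemma common_ancestor_trek (k0 v w : 'I_n) :
  connect (edge A) k0 v -> connect (edge A) k0 w -> trek A v w.
Proof.
move=> k0v k0w.
pose common i := connect (edge A) i v && connect (edge A) i w.
have common_k0 : common k0 by apply/andP.
have [k /andP [kv kw] kmax] := arg_maxnP (fun i : 'I_n => val i) common_k0.
have vk : connect [rel a b | edge A b a] v k by rewrite connect_rev.
case/connectP: vk => rv prv lrv; case/connectP: kw => rw prw lrw.
exists (rv ++ rw); split; last by rewrite last_cat -lrv.
have sorted_rw : path (fun a b : 'I_n => (a < b)%N) k rw.
  by apply: sub_path prw => a b /(edge_lt hA).
have sorted_rv : path (fun a b : 'I_n => (b < a)%N) v rv.
  by apply: sub_path prv => a b /(edge_lt hA).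
have ltn_tr : transitive (fun a b : 'I_n => (a < b)%N) by move=> ? ? ?; apply: ltn_trans.
have gtn_tr : transitive (fun a b : 'I_n => (b < a)%N) by move=> ? ? ? h1 h2; apply: ltn_trans h2 h1.
split; [|split].
- rewrite -cat_cons cat_uniq; apply/and3P; split.
  + by apply: (sorted_uniq gtn_tr) => [a|]; [rewrite /= ltnn | exact: sorted_rv].
  + apply/hasPn => z zrw; apply/negP => zrv.
    have lt_kz : (k < z)%N by move/allP: (order_path_min ltn_tr sorted_rw); apply.
    have zv : connect (edge A) z v.
      have vz : connect [rel a b | edge A b a] v z by apply: path_connect prv z zrv.
      by rewrite connect_rev in vz.
    have zw : connect (edge A) z w.
      by rewrite lrw; apply: connect_to_last prw _; rewrite inE zrw orbT.
    have common_z : common z by apply/andP.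
    by have := kmax z common_z; rewrite /geq /= leqNgt lt_kz.
  + by apply: (sorted_uniq ltn_tr) (path_sorted sorted_rw) => a; rewrite /= ltnn.
- rewrite cat_path; apply/andP; split.
    by apply: sub_path prv => a b /= eba; rewrite /sadj eba orbT.
  by rewrite -lrv; apply: sub_path prw => a b eab; rewrite /sadj eab.
- by apply/(nocollP v); apply: nocoll_backward => //; rewrite -lrv; apply: nocoll_forward.
Qed.

Lemma udgE (v w : 'I_n) : udg A v w <-> (v != w) && (Umat A v w != 0).
Proof.
rewrite (Umat_neq0 hA); split.
  case=> ne_vw [q [[_ [pq /(nocollP v) noc]] lq]].
  have [k [kv kw _]] := trek_source pq noc.
  apply/andP; split; first exact/eqP.
  by apply/existsP; exists k; rewrite kv -lq kw.
case/andP => /eqP ne_vw /existsP [k /andP [kv kw]].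
by split => //; apply: common_ancestor_trek kv kw.
Qed.
End Treks.

Theorem lemma2p4 (n : nat) :
  (* f : A |-> U_A is a bijection from \mathbb{A} onto \mathbb{Y} *)
  ((forall A B : 'M[int]_n, adjA A -> adjA B -> Umat A = Umat B -> A = B) /\
   (forall Y : 'M[int]_n, (exists A, adjA A /\ Umat A = Y) ->
      exists A, adjA A /\ Umat A = Y)) /\
  (* a(U_D) is the adjacency matrix of U^D *)
  (forall A : 'M[int]_n, adjA A -> is_adj_matrix (amat (Umat A)) (udg A)).
Proof.
split; first by split; [exact: Umat_inj | by []].
move=> A hA v w; rewrite /amat mxE; split => [/(udgE hA) -> //|not_udg].
by case: ifP => // /(udgE hA) /not_udg.
Qed.
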